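(* Let $n\ge k\ge 1$ be integers, $i\in\{1,\ldots,n\}$, and let $H\sim\text{Hyp}(n,i,k)$ be such that $\mathbb{E}(H)\le 1$. Then $\mathbb{P}(H=1) \ge \mathbb{P}(H\ge 2)$.
   Context: $\text{Hyp}(n,i,k)$ denotes the hypergeometric distribution: the number of black marbles in a sample without replacement of size $k$ from an urn with $i$ black and $n-i$ white marbles, i.e. $\mathbb{P}(H=j)=\binom{i}{j}\binom{n-i}{k-j}/\binom{n}{k}$. One has $\mathbb{E}(H)=ik/n$. *)

From mathcomp Require Import all_boot all_order all_algebra.
Set Implicit Arguments. Unset Strict Implicit. Unset Printing Implicit Defensive.
Import Order.TTheory GRing.Theory Num.Theory.
Local Open Scope ring_scope.

Definition hyp_pmf (R : realFieldType) (n i k j : nat) : R :=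
  ('C(i, j) * 'C(n - i, k - j))%:R / 'C(n, k)%:R.

Definition hyp_mean (R : realFieldType) (n i k : nat) : R :=
  \sum_(0 <= j < k.+1) j%:R * hyp_pmf R n i k j.

Definition hyp_ge (R : realFieldType) (n i k m : nat) : R :=
  \sum_(m <= j < k.+1) hyp_pmf R n i k j.

From mathcomp Require Import all_boot all_order all_algebra.
From mathcomp Require Import zify.
Set Implicit Arguments. Unset Strict Implicit. Unset Printing Implicit Defensive.
Import Order.TTheory GRing.Theory Num.Theory.

(* With a_j = C(i,j) C(n-i,k-j), so that P(H = j) = a_j / C(n,k), the mean is
   i k / n, hence E(H) <= 1 means i k <= n.  Then for 1 <= j < k the ratio
   a_(j+1) / a_j = (i-j)(k-j) / ((j+1)(n-i-k+j+1)) is at most 1/2, because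
   (i-j)(k-j) <= (i-1)(k-1) <= n+1-i-k.  Hence a_2 + ... + a_k <= a_1 (1/2 + 1/4 + ...)
   <= a_1. *)

Definition hyp_weight (n i k j : nat) : nat := 'C(i, j) * 'C(n - i, k - j).

Lemma sum_halving_le_head (X : nat -> nat) (k : nat) :
  (forall j, 0 < j < k -> 2 * X j.+1 <= X j) ->
  \sum_(2 <= j < k.+1) X j <= X 1.
Proof.
move=> halve.
have tail t : 0 < t <= k -> \sum_(2 <= j < t.+1) X j + X t <= X 1.
  elim: t => [//|[|t] IH /andP[_ tk]]; first by rewrite big_geq.
  rewrite big_nat_recr //=.
  have := IH (ltnW tk); have := halve t.+1 tk; lia.
case: k halve tail => [_ _|k _ tail]; first by rewrite big_geq.
exact: leq_trans (leq_addr _ _) (tail k.+1 (leqnn _)).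
Qed.

Lemma hyp_ratio_bound (n i k j : nat) : i * k <= n -> 0 < j < k ->
  2 * ((i - j) * (k - j)) <= j.+1 * (n - i - (k - j.+1)).
Proof.
move=> ikn /andP[j_gt0 jk].
have shrink : (i - j) * (k - j) <= (i - 1) * (k - 1) by apply: leq_mul; lia.
have corner : (i - 1) * (k - 1) <= n - i - (k - j.+1).
  case: i ikn {shrink} => [|i] ikn; first by [].
  case: k ikn jk => [//|k] ikn jk.
  rewrite !subn1 /=; nia.
by apply: leq_mul => //; apply: leq_trans shrink corner.
Qed.

Lemma hyp_weight_halves (n i k j : nat) : i * k <= n -> 0 < j < k ->
  2 * hyp_weight n i k j.+1 <= hyp_weight n i k j.
Proof.
rewrite /hyp_weight => ikn jk; have ratio := hyp_ratio_bound ikn jk.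
set m := n - i in ratio *; set t := k - j.+1 in ratio *.
have kj : k - j = t.+1 by rewrite /t; lia.
rewrite kj in ratio *; rewrite -(@leq_pmul2l (j.+1 * t.+1)) //.
have -> : j.+1 * t.+1 * (2 * ('C(i, j.+1) * 'C(m, t)))
        = 2 * t.+1 * 'C(m, t) * (j.+1 * 'C(i, j.+1)) by lia.
have -> : j.+1 * t.+1 * ('C(i, j) * 'C(m, t.+1))
        = j.+1 * 'C(i, j) * (t.+1 * 'C(m, t.+1)) by lia.
rewrite !mul_bin_left.
have -> : 2 * t.+1 * 'C(m, t) * ((i - j) * 'C(i, j))
        = 2 * ((i - j) * t.+1) * ('C(i, j) * 'C(m, t)) by lia.
have -> : j.+1 * 'C(i, j) * ((m - t) * 'C(m, t))
        = j.+1 * (m - t) * ('C(i, j) * 'C(m, t)) by lia.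
exact: leq_mul.
Qed.

Lemma sum_mul_hyp_weight (n i k : nat) : i <= n -> 0 < k ->
  \sum_(0 <= j < k.+1) j * hyp_weight n i k j = i * 'C(n.-1, k.-1).
Proof.
case: k => [//|k] iN _.
rewrite /hyp_weight big_nat_recl // mul0n add0n big_mkord.
under eq_bigr => j _ do rewrite mulnA -mul_bin_diag subSS -mulnA.
rewrite -big_distrr /= binomial.Vandermonde.
by case: i iN => [|i] iN //=; congr (_ * 'C(_, _)); lia.
Qed.

Local Open Scope ring_scope.

Lemma hyp_meanE (R : realFieldType) (n i k : nat) :
  (0 < k)%N -> (k <= n)%N -> (i <= n)%N ->
  hyp_mean R n i k = (i * k)%:R / n%:R.
Proof.
move=> k_gt0 kn iN.
have pascal : (n * 'C(n.-1, k.-1) = k * 'C(n, k))%N by rewrite mul_bin_diag prednK.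
rewrite /hyp_mean /hyp_pmf.
under eq_bigr => j _ do rewrite mulrA -natrM.
rewrite -mulr_suml -natr_sum (sum_mul_hyp_weight iN k_gt0).
apply/eqP; rewrite eqr_div ?pnatr_eq0 -?lt0n ?bin_gt0 //; last lia.
by rewrite -!natrM eqr_nat mulnAC -mulnA pascal mulnA.
Qed.

Theorem lemma2 (R : realFieldType) (n k i : nat) :
  (1 <= k)%N -> (k <= n)%N -> (1 <= i)%N -> (i <= n)%N ->
  hyp_mean R n i k <= 1 ->
  hyp_ge R n i k 2 <= hyp_pmf R n i k 1.
Proof.
move=> k_gt0 kn _ iN.
rewrite hyp_meanE // ler_pdivrMr ?ltr0n; last lia.
rewrite mul1r ler_nat => ikn.
rewrite /hyp_ge /hyp_pmf -mulr_suml -natr_sum.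
rewrite ler_pM2r ?invr_gt0 ?ltr0n ?bin_gt0 // ler_nat.
apply: (@sum_halving_le_head (hyp_weight n i k)) => j.
exact: hyp_weight_halves.
Qed.
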